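(* Let $\mathcal S\in\Sigma^n$ be a string and $\pi:[n]\to[n]$ be an order-preserving permutation for $\mathcal S$. Let $i>1$ be an irreducible $\mathrm{LPF}_\pi$ position. Then, for every $j>1$ with $\pi(j-1)<\pi(i-1)$ and $\mathrm{rlce}(i,j)=\mathrm{LPF}_\pi[i]$, it holds that $\mathcal S[i-1]\ne\mathcal S[j-1]$.
   Context: For $i\ne j$, $\mathrm{rlce}(i,j)$ is the length of the longest common prefix of $\mathcal S[i,n]$ and $\mathcal S[j,n]$. A permutation $\pi:[n]\to[n]$ is order-preserving for $\mathcal S$ if for all $i,j\in[n-1]$, $\pi(i)<\pi(j)$ and $\mathcal S[i,i+1]=\mathcal S[j,j+1]$ imply $\pi(i+1)<\pi(j+1)$. $\mathrm{LPF}_\pi[i]=0$ if $\pi(i)=1$, else $\mathrm{LPF}_\pi[i]=\max_{\pi(j)<\pi(i)}\mathrm{rlce}(j,i)$. A position $i\in[n]$ is an irreducible $\mathrm{LPF}_\pi$ position if $i=1$ or $\mathrm{LPF}_\pi[i]\ne\mathrm{LPF}_\pi[i-1]-1$. *)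

(* Strings are 1-indexed: S : seq T, n = size S, S[k] = nth S (k-1). *)
From mathcomp Require Import all_boot.
Set Implicit Arguments. Unset Strict Implicit. Unset Printing Implicit Defensive.

Section Defs.
Variable T : eqType.

Fixpoint lcp (s t : seq T) : nat :=
  match s, t with
  | x :: s', y :: t' => if x == y then (lcp s' t').+1 else 0
  | _, _ => 0
  end.

Definition chr (S : seq T) (k : nat) : option T := onth S k.-1.

Definition substr (S : seq T) (i j : nat) : seq T := take (j.+1 - i) (drop i.-1 S).

Definition rlce (S : seq T) (i j : nat) : nat := lcp (drop i.-1 S) (drop j.-1 S).

Definition is_perm_n (n : nat) (pi : nat -> nat) : Prop :=
  (forall i, 1 <= i <= n -> 1 <= pi i <= n) /\
  (forall i j, 1 <= i <= n -> 1 <= j <= n -> pi i = pi j -> i = j).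

Definition order_preserving (S : seq T) (pi : nat -> nat) : Prop :=
  is_perm_n (size S) pi /\
  forall i j, 1 <= i <= (size S).-1 -> 1 <= j <= (size S).-1 ->
    pi i < pi j -> substr S i i.+1 = substr S j j.+1 -> pi i.+1 < pi j.+1.

Definition LPF (S : seq T) (pi : nat -> nat) (i : nat) : nat :=
  if pi i == 1 then 0
  else \max_(j < (size S).+1 | (0 < j) && (pi j < pi i)) rlce S j i.

(* irreducible: i = 1 or LPF[i] <> LPF[i-1] - 1 (integer subtraction,
   written as LPF[i] + 1 <> LPF[i-1] to avoid truncated nat subtraction) *)
Definition irreducible_LPF (S : seq T) (pi : nat -> nat) (i : nat) : bool :=
  (1 <= i <= size S) && ((i == 1) || ((LPF S pi i).+1 != LPF S pi i.-1)).

End Defs.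

(** If [S[i-1] = S[j-1]] with [pi(j-1) < pi(i-1)], then [rlce(i-1, j-1) = rlce(i, j) + 1],
    so [LPF[i-1] >= LPF[i] + 1] when [rlce(i, j) = LPF[i]].  On the other hand
    [LPF[i-1] <= LPF[i] + 1] always holds: a previous occurrence sharing at least two
    letters with [S[i-1..]] starts with the same pair as [S[i-1..i]], so order
    preservation makes its shift by one a previous occurrence for [i].  Hence
    [LPF[i-1] = LPF[i] + 1], i.e. [i] is reducible. *)
From mathcomp Require Import all_boot.
From mathcomp Require Import zify.

Set Implicit Arguments.
Unset Strict Implicit.

Lemma onth_drop (A : Type) (s : seq A) n : onth s n = ohead (drop n s).
Proof. by elim: s n => [|x s IH] [|n] //=. Qed.

Section LongestCommonPrefix.
Variable T : eqType.
Implicit Types s t : seq T.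

Lemma lcp_sym s t : lcp s t = lcp t s.
Proof.
elim: s t => [|x s IH] [|y t] //=.
by rewrite eq_sym IH; case: eqP => // ->.
Qed.

Lemma lcp_le_size s t : lcp s t <= size s.
Proof. by elim: s t => [|x s IH] [|y t] //=; case: eqP => // _; rewrite ltnS IH. Qed.

Lemma lcp_gt0 s t : (0 < lcp s t) = (ohead s != None) && (ohead s == ohead t).
Proof. by case: s t => [|x s] [|y t] //=; rewrite (inj_eq Some_inj); case: eqP. Qed.

Lemma lcp_behead s t : 0 < lcp s t -> lcp s t = (lcp (behead s) (behead t)).+1.
Proof. by case: s t => [|x s] [|y t] //=; case: eqP. Qed.

Lemma lcp_take n s t : n <= lcp s t -> take n s = take n t.
Proof.
elim: n s t => [|n IH] [|x s] [|y t] //=.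
by case: eqP => // <-; rewrite ltnS => /IH ->.
Qed.

End LongestCommonPrefix.

Section RightLongestCommonExtension.
Variable T : eqType.
Implicit Types S : seq T.

Lemma rlce_sym S i j : rlce S i j = rlce S j i.
Proof. exact: lcp_sym. Qed.

Lemma rlce_le_size S i j : rlce S i j <= size S - i.-1.
Proof. by rewrite -size_drop lcp_le_size. Qed.

Lemma rlce_gt0 S i j : 0 < i <= size S -> chr S i = chr S j -> 0 < rlce S i j.
Proof.
move=> /andP[i_gt0 i_le] eq_ij; rewrite /rlce lcp_gt0 -!onth_drop.
rewrite -/(chr S i) -/(chr S j) eq_ij eqxx andbT -eq_ij /chr.
by case: onth (onthTE S i.-1) => // /esym/negbT; rewrite -leqNgt; lia.
Qed.

Lemma rlce_succ S i j :
  0 < i -> 0 < j -> 0 < rlce S i j -> rlce S i j = (rlce S i.+1 j.+1).+1.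
Proof.
move=> i_gt0 j_gt0; rewrite /rlce => /lcp_behead ->.
by rewrite -!drop1 !drop_drop !add1n !prednK.
Qed.

Lemma substr_pair_eq S i j : 1 < rlce S i j -> substr S i i.+1 = substr S j j.+1.
Proof. by move/lcp_take; rewrite /substr !subSn // !subnn. Qed.

End RightLongestCommonExtension.

Section LongestPreviousFactor.
Variables (T : eqType) (S : seq T) (pi : nat -> nat).

Lemma LPF_ge i k : 0 < k <= size S -> 0 < pi k < pi i -> rlce S k i <= LPF S pi i.
Proof.
move=> /andP[k_gt0 k_le] /andP[pik_gt0 pik_lt].
have pii_neq1 : (pi i == 1) = false by apply/eqP; lia.
rewrite /LPF pii_neq1.
have k_lt : k < (size S).+1 by [].
by apply: (leq_bigmax_cond (F := fun k : 'I_(size S).+1 => rlce S k i) (Ordinal k_lt));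
  rewrite /= k_gt0.
Qed.

Lemma LPF_le i m :
  (forall k, 0 < k <= size S -> pi k < pi i -> rlce S k i <= m) -> LPF S pi i <= m.
Proof.
move=> bound; rewrite /LPF; case: ifP => // _.
apply/bigmax_leqP => k /andP[k_gt0 pik_lt]; apply: bound => //.
by rewrite k_gt0 -ltnS ltn_ord.
Qed.

Lemma LPF_pred_le i :
  order_preserving S pi -> 1 < i <= size S -> LPF S pi i.-1 <= (LPF S pi i).+1.
Proof.
move=> [[pi_range _] pi_op] /andP[i_gt1 i_le].
apply: LPF_le => k /andP[k_gt0 k_le] pik_lt.
have [|long] := leqP (rlce S k i.-1) 1; first lia.
have k_lt : k < size S by have := rlce_le_size S k i.-1; lia.
have pik1_lt : pi k.+1 < pi i.
  rewrite -(ltn_predK i_gt1).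
  apply: pi_op; rewrite ?(substr_pair_eq long) //; lia.
have i1_gt0 : 0 < i.-1 by lia.
rewrite rlce_succ ?(ltn_predK i_gt1) ?(ltnW long) //.
by rewrite ltnS LPF_ge ?pik1_lt ?andbT; have := pi_range k.+1; lia.
Qed.

End LongestPreviousFactor.

Theorem lemma14 (T : eqType) (S : seq T) (pi : nat -> nat) (i : nat) :
  order_preserving S pi ->
  1 < i -> irreducible_LPF S pi i ->
  forall j, 1 < j <= size S ->
    pi j.-1 < pi i.-1 ->
    rlce S i j = LPF S pi i ->
    chr S i.-1 != chr S j.-1.
Proof.
move=> op i_gt1 /andP[/andP[_ i_le] irr] j /andP[j_gt1 j_le] pij_lt rlce_ij.
apply/eqP => eq_chr.
have pij_gt0 : 0 < pi j.-1 by have := op.1.1 j.-1; lia.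
have lower : (LPF S pi i).+1 <= LPF S pi i.-1.
  have rlce_pred : rlce S i.-1 j.-1 = (rlce S i j).+1.
    rewrite rlce_succ ?rlce_gt0 ?(ltn_predK i_gt1) ?(ltn_predK j_gt1) //; lia.
  by rewrite -rlce_ij -rlce_pred rlce_sym LPF_ge ?pij_gt0 //; lia.
have upper : LPF S pi i.-1 <= (LPF S pi i).+1 by rewrite LPF_pred_le ?i_gt1.
case/orP: irr => [/eqP i1|]; first lia.
by rewrite eqn_leq lower upper.
Qed.
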